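(* Let $\lambda_1,\ldots,\lambda_n\in\mathcal WP^+$, $\pi_\Lambda=\pi_{\lambda_1}\otimes\cdots\otimes\pi_{\lambda_n}$, $\pi_{\tilde\Lambda}=\pi_{\tilde\lambda_1}\otimes\cdots\otimes\pi_{\tilde\lambda_n}$, let $\mathbf i=(i_k,\ldots,i_1)$ be a sequence in $I$ with associated $\mathbf m=(m_k,\ldots,m_1)$, and put $\pi=F_{\mathbf i}\pi_\Lambda$, $\tilde\pi=F_{(\mathbf i,\mathbf m)}\pi_{\tilde\Lambda}$. For $1\le s\le k$ let $\mathbf i_{[s]}=(i_s,\ldots,i_1)$ and $(\mathbf i,\mathbf m)_{[s]}=((i_s,m_s),\ldots,(i_1,m_1))$. If $\pi\ne\mathbf0$, then $\tilde\pi\ne\mathbf0$, and moreover $$H_{i_s}^{F_{\mathbf i_{[s-1]}}\pi_\Lambda}(t)=\tilde H_{(i_s,m_s)}^{F_{(\mathbf i,\mathbf m)_{[s-1]}}\pi_{\tilde\Lambda}}(t)$$ for all $s=1,\ldots,k$ and $t\in[0,1]$ (with $F_{\mathbf i_{[0]}}$, $F_{(\mathbf i,\mathbf m)_{[0]}}$ the identity).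
   Context: $I$ countable, $A=(a_{ij})$ Borcherds–Cartan matrix ($a_{ii}=2$ or $a_{ii}\in\mathbb Z_{\le0}$; $a_{ij}\in\mathbb Z_{\le0}$, $i\ne j$; $a_{ij}=0\iff a_{ji}=0$), $I^{re}=\{a_{ii}=2\}$, $I^{im}=I\setminus I^{re}$, datum $(A,\{\alpha_i\},\{\alpha_i^\vee\},P,P^\vee)$, $\alpha_i^\vee(\alpha_j)=a_{ij}$, linearly independent simple roots/coroots, $P^+$ dominant integral weights. Monoid $\mathcal W$ generated by $r_i$ ($r_i(\mu)=\mu-\alpha_i^\vee(\mu)\alpha_i$) with $r_i^2=1$ (real), $(r_ir_j)^m=(r_jr_i)^m=1$ (real $i\ne j$, $\mathrm{ord}(r_ir_j)=m\in\{2,3,4,6\}$), $r_ir_j=r_jr_i$ ($i\in I^{im}$, $j\ne i$, $a_{ij}=0$), acting on $\mathfrak h^*$; $\mathcal WP^+=\{w\lambda:w\in\mathcal W,\lambda\in P^+\}$. Paths: piecewise-linear $\pi:[0,1]\to\mathfrak h^*_{\mathbb R}$ with $\pi(0)=0$, $\pi(1)\in P$; $\mathbf0$ an extra element. $H_i^\pi(t)=\alpha_i^\vee(\pi(t))$, $m_i^\pi=\min\{H_i^\pi(t)\in\mathbb Z\}$. Root operator $f_i$ ($f_i\mathbf 0=\mathbf0$): $f_+^i=\max\{t:H_i^\pi(t)=m_i^\pi\}$; if $f_+^i=1$, $f_i\pi=\mathbf0$; else $f_-^i=\min\{t\ge f_+^i:H_i^\pi(t)=m_i^\pi+1\}$ and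 $f_i\pi=\pi$ on $[0,f_+^i]$, $\pi-(H_i^\pi-m_i^\pi)\alpha_i$ on $[f_+^i,f_-^i]$, $\pi-\alpha_i$ on $[f_-^i,1]$. $F_{\mathbf i}=f_{i_k}\cdots f_{i_1}$. $\pi_\mu(t)=t\mu$; concatenation $(\pi_1\otimes\cdots\otimes\pi_n)(t)=\sum_{l<m}\pi_l(1)+\pi_m(nt-m+1)$ on $[\frac{m-1}n,\frac mn]$. Kac–Moody side: $\tilde I=\{(i,1)\}_{i\in I^{re}}\sqcup\{(i,m)\}_{i\in I^{im},m\ge1}$; $\tilde A$ with $2$ on the diagonal and $\tilde a_{(i,m),(j,n)}=a_{ij}$ otherwise; Cartan datum $(\tilde A,\{\tilde\alpha_{(i,m)}\},\{\tilde\alpha^\vee_{(i,m)}\},\tilde P,\tilde P^\vee)$; for $\mu\in\mathcal WP^+$ fixed $\tilde\mu\in\tilde P$ with $\tilde\alpha^\vee_{(i,m)}(\tilde\mu)=\alpha_i^\vee(\mu)$ for all $(i,m)$. For paths $\tilde\pi$ into $(\tilde{\mathfrak h}_{\mathbb R})^*$, $\tilde H_{(i,m)}^{\tilde\pi}(t)=\tilde\alpha^\vee_{(i,m)}(\tilde\pi(t))$, and root operators $f_{(i,m)}$ defined by the same formulas. $\mathbf m$ associated with $\mathbf i$: $m_s=1$ if $i_s\in I^{re}$, $m_s=\#\{t\le s:i_t=i_s\}$ if $i_s\in I^{im}$; $F_{(\mathbf i,\mathbf m)}=f_{(i_k,m_k)}\cdots f_{(i_1,m_1)}$. *)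

From HB Require Import structures.
From mathcomp Require Import all_boot all_order all_algebra.
From mathcomp Require Import boolp classical_sets reals.
Set Implicit Arguments. Unset Strict Implicit. Unset Printing Implicit Defensive.
Import Order.TTheory GRing.Theory Num.Theory.
Local Open Scope ring_scope.
Local Open Scope classical_set_scope.

Section Paths.
Variable R : realType.

(** Paths into a real vector space W; only values on [0,1] matter. *)
Definition rpath (W : lmodType R) := R -> W.

Definition is_linear_fun (W : lmodType R) (h : W -> R) :=
  forall (c : R) (u v : W), h (c *: u + v) = c * h u + h v.

(** The root operator f associated with a coroot h (a linear functional) and
    a root al; [None] stands for the extra element 0. *)
Definition Hfun (W : lmodType R) (h : W -> R) (p : rpath W) : R -> R :=
  fun t => h (p t).

Definition min_int (W : lmodType R) (h : W -> R) (p : rpath W) : R :=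
  inf [set x : R | exists t, 0 <= t <= 1 /\ Hfun h p t = x /\ x \is a Num.int].

Definition fplus (W : lmodType R) (h : W -> R) (p : rpath W) : R :=
  sup [set t : R | 0 <= t <= 1 /\ Hfun h p t = min_int h p].

Definition fminus (W : lmodType R) (h : W -> R) (p : rpath W) : R :=
  inf [set t : R | fplus h p <= t <= 1 /\ Hfun h p t = min_int h p + 1].

Definition root_op (W : lmodType R) (h : W -> R) (al : W) (p : rpath W)
  : option (rpath W) :=
  if fplus h p == 1 then None
  else Some (fun t =>
    if t <= fplus h p then p t
    else if t <= fminus h p then p t - (Hfun h p t - min_int h p) *: al
    else p t - al).

Definition root_opt (W : lmodType R) (h : W -> R) (al : W) (o : option (rpath W)) :=
  obind (root_op h al) o.

(** F_{(j_k,...,j_1)} with the sequence given in order of application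
    [:: j_1; ...; j_k] *)
Definition Fseq (J : Type) (W : lmodType R) (h : J -> W -> R) (al : J -> W)
  (js : seq J) (o : option (rpath W)) : option (rpath W) :=
  foldl (fun o j => root_opt (h j) (al j) o) o js.

Definition pi_line (W : lmodType R) (mu : W) : rpath W := fun t => t *: mu.

(** concatenation pi_1 (x) ... (x) pi_n : on [(m-1)/n, m/n] it is
    sum_{l<m} pi_l(1) + pi_m(n t - m + 1) (1-based m) *)
Definition concat_paths (W : lmodType R) (ps : seq (rpath W)) : rpath W :=
  fun t =>
    let n := size ps in
    let m := maxn 1 `|Num.ceil (n%:R * t)|%N in
    \sum_(l < m.-1) nth (fun _ => 0) ps l 1
    + nth (fun _ => 0) ps m.-1 (n%:R * t - m%:R + 1).

Definition refl (I : Type) (W : lmodType R) (cor : I -> W -> R) (al : I -> W)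
  (i : I) (mu : W) : W := mu - cor i mu *: al i.
End Paths.

Definition BC_matrix (I : Type) (a : I -> I -> int) : Prop :=
  (forall i, a i i = 2 \/ a i i <= 0)
  /\ (forall i j, i <> j -> a i j <= 0)
  /\ (forall i j, a i j = 0 <-> a j i = 0).

Definition is_real (I : Type) (a : I -> I -> int) (i : I) : bool := a i i == 2.

Definition tilde_index (I : Type) (a : I -> I -> int) (x : I * nat) : Prop :=
  if is_real a x.1 then x.2 = 1%N else (0 < x.2)%N.

Definition tilde_a (I : eqType) (a : I -> I -> int) (x y : I * nat) : int :=
  if x == y then 2 else a x.1 y.1.

Definition assoc_m (I : eqType) (a : I -> I -> int) (ix : seq I) : seq (I * nat) :=
  [seq (x.2, if is_real a x.2 then 1%N else count_mem x.2 (take x.1.+1 ix))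
  | x <- zip (iota 0 (size ix)) ix].

Section Datum.
Variable R : realType.

Definition lin_indep (J : eqType) (W : lmodType R) (ok : J -> Prop) (f : J -> W) :=
  forall (s : seq J) (c : J -> R), uniq s -> (forall j, j \in s -> ok j) ->
    \sum_(j <- s) c j *: f j = 0 -> forall j, j \in s -> c j = 0.

Definition lin_indep_fun (J : eqType) (W : lmodType R) (ok : J -> Prop)
  (f : J -> W -> R) :=
  forall (s : seq J) (c : J -> R), uniq s -> (forall j, j \in s -> ok j) ->
    (forall v, \sum_(j <- s) c j * f j v = 0) -> forall j, j \in s -> c j = 0.

(** A realization (A,{alpha_i},{alpha_i^vee},P,P^vee), with h*_R modelled by
    the real vector space W, coroots by linear functionals on W, and the weight
    lattice by an additive subgroup P of W (on which coroots are integral). *)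
Definition realization (J : eqType) (W : lmodType R) (ok : J -> Prop)
  (a : J -> J -> int) (al : J -> W) (cor : J -> W -> R) (P : set W) : Prop :=
  (forall j, is_linear_fun (cor j))
  /\ (forall i j, ok i -> ok j -> cor i (al j) = (a i j)%:~R)
  /\ lin_indep ok al /\ lin_indep_fun ok cor
  /\ P 0 /\ (forall u v, P u -> P v -> P (u - v))
  /\ (forall j, ok j -> P (al j))
  /\ (forall j mu, ok j -> P mu -> cor j mu \is a Num.int).

Definition dominant (I : Type) (W : lmodType R) (cor : I -> W -> R) (P : set W)
  (lam : W) : Prop := P lam /\ forall i, 0 <= cor i lam.

Definition WPplus (I : Type) (W : lmodType R) (cor : I -> W -> R) (al : I -> W)
  (P : set W) (mu : W) : Prop :=
  exists (w : seq I) (lam : W), dominant cor P lam /\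
    mu = foldr (refl cor al) lam w.
End Datum.

From HB Require Import structures.
From mathcomp Require Import all_boot all_order all_algebra.
From mathcomp Require Import boolp classical_sets reals.
Set Implicit Arguments. Unset Strict Implicit. Unset Printing Implicit Defensive.
Import Order.TTheory GRing.Theory Num.Theory.
Local Open Scope ring_scope.

(* The root operator f_i only looks at the function H_i = alpha_i^vee o pi, and
   any other coroot sees the result through its value on alpha_i.  Applying
   f_{(i,m)} with a fresh copy m of an imaginary index i makes the tilde side
   mimic the original one: tilde_alpha_{(i,m)} pairs with every copy that has
   not been used yet exactly as alpha_i pairs with the corresponding coroot,
   because the off-diagonal entries of tilde_A are those of A.  Hence, by
   induction along the word, the coroots not yet used take the same values on
   both sides, and in particular the operator applied next sees the same
   function H. *)

Section LinearFunctional.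
Variables (R : realType) (W : lmodType R) (h : W -> R).
Hypothesis h_lin : is_linear_fun h.

Lemma linear_fun0 : h 0 = 0.
Proof.
by have := h_lin 1 0 0; rewrite scale1r addr0 mul1r -[LHS]addr0 => /addrI <-.
Qed.

Lemma linear_funD u v : h (u + v) = h u + h v.
Proof. by have := h_lin 1 u v; rewrite scale1r mul1r. Qed.

Lemma linear_funZ c u : h (c *: u) = c * h u.
Proof. by have := h_lin c u 0; rewrite addr0 linear_fun0 addr0. Qed.

Lemma linear_funB u v : h (u - v) = h u - h v.
Proof. by rewrite -scaleN1r linear_funD linear_funZ mulN1r. Qed.

Lemma linear_fun_sum (J : Type) (r : seq J) (F : J -> W) :
  h (\sum_(j <- r) F j) = \sum_(j <- r) h (F j).
Proof. exact: (big_morph h linear_funD linear_fun0). Qed.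
End LinearFunctional.

Section RootOperatorTransfer.
Variables (R : realType) (W W' : lmodType R).
Variables (h : W -> R) (h' : W' -> R) (p : rpath W) (p' : rpath W').
Hypothesis Hfun_eq : Hfun h p = Hfun h' p'.

Lemma min_int_Hfun : min_int h p = min_int h' p'.
Proof. by rewrite /min_int Hfun_eq. Qed.

Lemma fplus_Hfun : fplus h p = fplus h' p'.
Proof. by rewrite /fplus Hfun_eq min_int_Hfun. Qed.

Lemma fminus_Hfun : fminus h p = fminus h' p'.
Proof. by rewrite /fminus fplus_Hfun Hfun_eq min_int_Hfun. Qed.

Lemma root_op_transfer (al : W) (al' : W') (q : rpath W) :
  root_op h al p = Some q ->
  exists2 q', root_op h' al' p' = Some q' &
    forall (g : W -> R) (g' : W' -> R), is_linear_fun g -> is_linear_fun g' ->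
      g al = g' al' -> (forall t, g (p t) = g' (p' t)) ->
      forall t, g (q t) = g' (q' t).
Proof.
rewrite /root_op fplus_Hfun fminus_Hfun min_int_Hfun.
case: ifP => // _ [<-]; eexists; first reflexivity.
move=> g g' g_lin g'_lin Eal Ep t /=.
case: ifP => _; first exact: Ep.
case: ifP => _.
  by rewrite !(linear_funB g_lin, linear_funB g'_lin, linear_funZ g_lin,
               linear_funZ g'_lin) Ep Eal Hfun_eq.
by rewrite (linear_funB g_lin) (linear_funB g'_lin) Ep Eal.
Qed.
End RootOperatorTransfer.

Lemma concat_lines_transfer (R : realType) (W W' : lmodType R)
    (g : W -> R) (g' : W' -> R) (lams : seq W) (lams' : seq W') :
  is_linear_fun g -> is_linear_fun g' -> size lams' = size lams ->
  (forall l, (l < size lams)%N -> g' (nth 0 lams' l) = g (nth 0 lams l)) ->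
  forall t, g' (concat_paths [seq pi_line mu | mu <- lams'] t)
          = g (concat_paths [seq pi_line mu | mu <- lams] t).
Proof.
move=> g_lin g'_lin Esize Elam t.
have Eline l s : g' (nth (fun _ => 0) [seq pi_line mu | mu <- lams'] l s)
               = g (nth (fun _ => 0) [seq pi_line mu | mu <- lams] l s).
  have [ltl|gel] := ltnP l (size lams).
    rewrite (nth_map 0) ?Esize // (nth_map 0) //.
    by rewrite /pi_line (linear_funZ g_lin) (linear_funZ g'_lin) Elam.
  rewrite !nth_default ?size_map ?Esize //.
  by rewrite (linear_fun0 g_lin) (linear_fun0 g'_lin).
rewrite /concat_paths !size_map Esize.
rewrite (linear_funD g_lin) (linear_funD g'_lin).
rewrite (linear_fun_sum g_lin) (linear_fun_sum g'_lin).
by congr (_ + _); [apply: eq_bigr => l _|]; apply: Eline.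
Qed.

Lemma Fseq_rcons (R : realType) (J : Type) (W : lmodType R) (h : J -> W -> R)
    (al : J -> W) (js : seq J) (j : J) (o : option (rpath W)) :
  Fseq h al (rcons js j) o = root_opt (h j) (al j) (Fseq h al js o).
Proof. exact: foldl_rcons. Qed.

Section AssociatedCopies.
Variables (I : eqType) (a : I -> I -> int).

Definition tilde_m (pre : seq I) (i : I) : nat :=
  if is_real a i then 1%N else (count_mem i pre).+1.

Definition fresh_copy (pre : seq I) (x : I * nat) : bool :=
  is_real a x.1 || (count_mem x.1 pre < x.2)%N.

Lemma tilde_index_tilde_m pre i : tilde_index a (i, tilde_m pre i).
Proof. by rewrite /tilde_index /tilde_m /=; case: is_real. Qed.

Lemma fresh_copy_tilde_m pre i : fresh_copy pre (i, tilde_m pre i).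
Proof. by rewrite /fresh_copy /tilde_m /=; case: is_real => //=; rewrite ltnSn. Qed.

Lemma fresh_copy_rcons pre j x : fresh_copy (rcons pre j) x -> fresh_copy pre x.
Proof.
rewrite /fresh_copy => /orP[-> //|lt_count]; apply/orP; right.
apply: leq_ltn_trans lt_count.
by rewrite -cats1 count_cat leq_addr.
Qed.

Lemma assoc_m_rcons s i :
  assoc_m a (rcons s i) = rcons (assoc_m a s) (i, tilde_m s i).
Proof.
rewrite /assoc_m size_rcons -[(size s).+1]addn1 iotaD -!cats1 zip_cat ?size_iota //.
rewrite map_cat /=; congr (_ ++ [:: (_, _)]).
  apply/eq_in_map => -[k y] /(map_f fst); rewrite -/(unzip1 _) unzip1_zip ?size_iota //.
  by rewrite mem_iota /= => lt_k; rewrite takel_cat.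
by rewrite /tilde_m take_oversize ?size_cat ?addn1 // count_cat /= eqxx addn1.
Qed.

Lemma size_assoc_m s : size (assoc_m a s) = size s.
Proof. by rewrite /assoc_m size_map size_zip size_iota minnn. Qed.

Lemma take_assoc_m s s' : take (size s) (assoc_m a (s ++ s')) = assoc_m a s.
Proof.
elim/last_ind: s' => [|s' x IH]; first by rewrite cats0 take_oversize ?size_assoc_m.
rewrite -rcons_cat assoc_m_rcons -cats1 takel_cat ?IH //.
by rewrite size_assoc_m size_cat leq_addr.
Qed.
End AssociatedCopies.

Section WordTransfer.
Variables (R : realType) (I : eqType) (a : I -> I -> int).
Variables (V : lmodType R) (alpha : I -> V) (coroot : I -> V -> R).
Variables (Vt : lmodType R) (talpha : I * nat -> Vt) (tcoroot : I * nat -> Vt -> R).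
Hypothesis coroot_lin : forall i, is_linear_fun (coroot i).
Hypothesis tcoroot_lin : forall x, is_linear_fun (tcoroot x).
Hypothesis coroot_alpha : forall i j, coroot i (alpha j) = (a i j)%:~R.
Hypothesis tcoroot_talpha : forall x y, tilde_index a x -> tilde_index a y ->
  tcoroot x (talpha y) = (tilde_a a x y)%:~R.

Definition matched_paths (pre : seq I) (p : rpath V) (tp : rpath Vt) :=
  forall x, tilde_index a x -> fresh_copy a pre x ->
    forall t, tcoroot x (tp t) = coroot x.1 (p t).

Lemma tcoroot_talpha_fresh pre j x : tilde_index a x ->
  fresh_copy a (rcons pre j) x ->
  tcoroot x (talpha (j, tilde_m a pre j)) = coroot x.1 (alpha j).
Proof.
move=> x_index x_fresh.
rewrite tcoroot_talpha ?coroot_alpha /tilde_a //; last exact: tilde_index_tilde_m.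
case: eqP => [Ex|//]; move: x_fresh; rewrite Ex /fresh_copy /tilde_m /=.
case real_j: (is_real a j); first by move: real_j => /eqP ->.
by rewrite -cats1 count_cat /= eqxx addn1 ltnn.
Qed.

Lemma matched_root_op pre j p tp q : matched_paths pre p tp ->
  root_op (coroot j) (alpha j) p = Some q ->
  exists2 tq, root_op (tcoroot (j, tilde_m a pre j)) (talpha (j, tilde_m a pre j)) tp
                = Some tq
            & matched_paths (rcons pre j) q tq.
Proof.
move=> Ep Eq.
have EH : Hfun (coroot j) p = Hfun (tcoroot (j, tilde_m a pre j)) tp.
  apply: funext => t; rewrite /Hfun Ep //.
    exact: tilde_index_tilde_m.
  exact: fresh_copy_tilde_m.
have [tq Etq Eqtq] := root_op_transfer EH (talpha (j, tilde_m a pre j)) Eq.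
exists tq => // x x_index x_fresh t; symmetry.
apply: Eqtq; [exact: coroot_lin | exact: tcoroot_lin | |].
  by rewrite tcoroot_talpha_fresh.
by move=> s; rewrite Ep // (fresh_copy_rcons x_fresh).
Qed.

Lemma Fseq_matched p0 tp0 pre p : matched_paths [::] p0 tp0 ->
  Fseq coroot alpha pre (Some p0) = Some p ->
  exists2 tp, Fseq tcoroot talpha (assoc_m a pre) (Some tp0) = Some tp
            & matched_paths pre p tp.
Proof.
move=> E0; elim/last_ind: pre p => [|pre j IH] p; first by move=> [<-]; exists tp0.
rewrite assoc_m_rcons !Fseq_rcons.
case Epre: Fseq => [q|] //= Ep.
have [tq -> Eq] := IH q Epre.
exact: matched_root_op Eq Ep.
Qed.
End WordTransfer.

Theorem lemma4p1p5
  (R : realType) (I : countType) (a : I -> I -> int)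
  (V : lmodType R) (alpha : I -> V) (coroot : I -> V -> R) (P : set V)
  (Vt : lmodType R) (talpha : I * nat -> Vt) (tcoroot : I * nat -> Vt -> R)
  (Pt : set Vt)
  (lams : seq V) (tlams : seq Vt) (ix : seq I) :
  BC_matrix a ->
  realization (fun _ => True) a alpha coroot P ->
  realization (tilde_index a) (tilde_a a) talpha tcoroot Pt ->
  size tlams = size lams ->
  (forall l, (l < size lams)%N ->
     WPplus coroot alpha P (nth 0 lams l)
     /\ Pt (nth 0 tlams l)
     /\ (forall x, tilde_index a x ->
           tcoroot x (nth 0 tlams l) = coroot x.1 (nth 0 lams l))) ->
  let piL := concat_paths [seq pi_line mu | mu <- lams] in
  let tpiL := concat_paths [seq pi_line mu | mu <- tlams] in
  let tis := assoc_m a ix in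
  Fseq coroot alpha ix (Some piL) <> None ->
  Fseq tcoroot talpha tis (Some tpiL) <> None
  /\ (forall (pre : seq I) (i : I) (post : seq I), ix = pre ++ i :: post ->
      let m := if is_real a i then 1%N else (count_mem i pre).+1 in
      forall (p : rpath V) (tp : rpath Vt),
        Fseq coroot alpha pre (Some piL) = Some p ->
        Fseq tcoroot talpha (take (size pre) tis) (Some tpiL) = Some tp ->
        forall t : R, 0 <= t <= 1 ->
          Hfun (coroot i) p t = Hfun (tcoroot (i, m)) tp t).
Proof.
move=> _ [coroot_lin [coroot_alpha _]] [tcoroot_lin [tcoroot_talpha _]]
  Esize Elams piL tpiL tis piL_word.
have start : matched_paths a coroot tcoroot [::] piL tpiL.
  move=> x x_index _; apply: concat_lines_transfer => // l lt_l.
  by case: (Elams l lt_l) => _ [_ ->].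
have word := Fseq_matched coroot_lin tcoroot_lin
  (fun i j => coroot_alpha i j Logic.I Logic.I) tcoroot_talpha start.
split.
  case Ep: Fseq piL_word => [p|] // _.
  by have [tp Etp _] := word _ _ Ep; rewrite /tis Etp.
move=> pre i post Eix m p tp Ep Etp t _.
have [tp' Etp' Ematched] := word _ _ Ep.
move: Etp; rewrite /tis Eix take_assoc_m Etp' => -[<-].
rewrite /Hfun; symmetry.
by apply: Ematched; [exact: tilde_index_tilde_m | exact: fresh_copy_tilde_m].
Qed.
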